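(* Let $F(z,t)=\sum_{n\ge1}\sum_{m\ge0}a_{n,m}z^nt^m$ be very nice and let $\Theta=(\Theta_1,\ldots,\Theta_r)$ be a (possibly empty) sequence of the operators $\mathcal E,\mathcal N$ containing no two consecutive $\mathcal N$'s. Then $(\Theta F)(z,1)$ is a rational function of $z$, where $\Theta F=\Theta_r\circ\cdots\circ\Theta_1F$.
   Context: A bivariate series $F(z,t)$ is nice if $F(z,z^k)$ is a rational function of $z$ for every integer $k\ge0$; it is very nice if it is nice and $F(z,0)$ is also rational. For $G(z,t)=\sum_{n\ge1}\sum_{m\ge0}a_{n,m}z^nt^m$: $\mathcal E G(z,t)=\frac{G(z,1)-ztG(z,zt)}{1-zt}$ and $\mathcal N G(z,t)=G(z,0)+\sum_{n\ge1}\sum_{m\ge1}a_{n,m}\frac{1}{1-z^m}\cdot\frac{1-(tz)^m}{1-tz}z^n$. *)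

From HB Require Import structures.
From mathcomp Require Import all_boot all_order all_algebra.
Set Implicit Arguments. Unset Strict Implicit. Unset Printing Implicit Defensive.
Import Order.TTheory GRing.Theory Num.Theory.
Local Open Scope ring_scope.

(* A bivariate series F(z,t) = sum_{n,m} a_{n,m} z^n t^m in K[t][[z]] is
   represented by its z-coefficients: [F n] is the polynomial in t
   sum_m a_{n,m} t^m (so (F n)`_m = a_{n,m}). *)
Definition bser (K : fieldType) := nat -> {poly K}.

(* A univariate formal power series f(z) = sum_N f N z^N is rational if
   Q(z) f(z) = P(z) for polynomials P, Q with Q(0) <> 0. *)
Definition rational_series (K : fieldType) (f : nat -> K) : Prop :=
  exists (P Q : {poly K}), Q`_0 != 0 /\
    forall N : nat, \sum_(i < N.+1) Q`_i * f (N - i)%N = P`_N.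

(* z-coefficients of F(z, z^k):  [z^N] = sum_{n + k m = N} a_{n,m}.
   For k = 0 this is F(z,1). *)
Definition subst_zk (K : fieldType) (F : bser K) (k : nat) : nat -> K :=
  fun N => \sum_(n < N.+1) \sum_(m < size (F n))
             (if (n + k * m == N)%N then (F n)`_m else 0).

Definition at_t1 (K : fieldType) (F : bser K) : nat -> K := fun N => (F N).[1].
Definition at_t0 (K : fieldType) (F : bser K) : nat -> K := fun N => (F N)`_0.

Definition nice (K : fieldType) (F : bser K) : Prop :=
  forall k : nat, rational_series (subst_zk F k).

Definition very_nice (K : fieldType) (F : bser K) : Prop :=
  nice F /\ rational_series (at_t0 F).

Definition bs_t1 (K : fieldType) (G : bser K) : bser K := fun N => ((G N).[1])%:P.
(* G(z, z t) : [z^N] = sum_{n+m=N} a_{n,m} t^m *)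
Definition bs_zt (K : fieldType) (G : bser K) : bser K :=
  fun N => \sum_(n < N.+1) (G n)`_(N - n) *: 'X^(N - n).
Definition bs_mul_zt (K : fieldType) (G : bser K) : bser K :=
  fun N => if N is N'.+1 then 'X * G N' else 0.
Definition bs_div_1mzt (K : fieldType) (G : bser K) : bser K :=
  fun N => \sum_(j < N.+1) 'X^j * G (N - j)%N.

Definition opE (K : fieldType) (G : bser K) : bser K :=
  bs_div_1mzt (fun N => bs_t1 G N - bs_mul_zt (bs_zt G) N).

(* N G = G(z,0) + sum_{n>=1,m>=1} a_{n,m} z^n/(1-z^m) * (1-(tz)^m)/(1-tz),
   expanded: a_{n,m} z^n/(1-z^m) (1-(tz)^m)/(1-tz)
           = sum_{j>=0} sum_{i<m} a_{n,m} t^i z^(n + m j + i). *)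
Definition opN (K : fieldType) (G : bser K) : bser K :=
  fun N => ((G N)`_0)%:P +
    \sum_(1 <= n < N.+1) \sum_(1 <= m < size (G n)) \sum_(i < m)
       (if ((n + i <= N)%N && (m %| (N - n - i))%N)
        then (G n)`_m *: 'X^i else 0).

Inductive op := OE | ON.

Definition apply_op (K : fieldType) (o : op) (G : bser K) : bser K :=
  match o with OE => opE G | ON => opN G end.

(* Theta F = Theta_r o ... o Theta_1 F  for Theta = [:: Theta_1; ...; Theta_r] *)
Definition apply_ops (K : fieldType) (s : seq op) (F : bser K) : bser K :=
  foldl (fun G o => apply_op o G) F s.

Fixpoint no_two_N (s : seq op) : bool :=
  match s with
  | ON :: ((ON :: _) as _) => false
  | _ :: s' => no_two_N s'
  | [::] => true
  end.

(* For E we obtain (1 - z^(k+1)) (E G)(z,z^k) = G(z,1) - z^(k+1) G(z,z^(k+1))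
   and (E G)(z,0) = G(z,1): E maps nice series to very nice ones.  For N we
   obtain (N G)(z,z^k) = G(z,0) + S(z) with
   (1 - z^(k+1)) S(z) = sum_(j<=k) (G(z,z^j) - G(z,0)), from a counting
   recursion for the coefficients of z^n/(1-z^m) (1-z^((k+1)m))/(1-z^(k+1)):
   N maps very nice series vanishing at z = 0 to nice ones.  Since Theta has
   no two consecutive N's, every N in it is preceded by E or comes first, so
   by induction the series stays nice along Theta, and the theorem is the case
   k = 0. *)

From HB Require Import structures.
From mathcomp Require Import all_boot all_order all_algebra.
From mathcomp Require Import zify.
Import GRing.Theory.
Local Open Scope ring_scope.

Section FiniteSums.
Context {R : nmodType}.

Lemma sum_if_eq (F : nat -> R) (c n : nat) :
  \sum_(i < n) (if i == c :> nat then F i else 0) = if (c < n)%N then F c else 0.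
Proof. by rewrite -big_mkcond big_ord1_eq. Qed.

Lemma sum_widen (F : nat -> R) {A B : nat} : (A <= B)%N ->
  (forall i, (A <= i < B)%N -> F i = 0) ->
  \sum_(i < A) F i = \sum_(i < B) F i.
Proof.
move=> AB F0; rewrite -!(big_mkord xpredT) [RHS](big_cat_nat (n := A)) //=.
rewrite -[LHS]addr0; congr (_ + _); symmetry.
by rewrite big_nat_cond big1 // => i /andP[/F0 ->].
Qed.

Lemma sum_from1 (F : nat -> R) (n : nat) :
  F 0%N = 0 -> \sum_(1 <= i < n) F i = \sum_(i < n) F i.
Proof.
move=> F0; case: n => [|n]; first by rewrite big_geq // big_ord0.
by rewrite -(big_mkord xpredT) (big_ltn (ltn0Sn _)) F0 add0r.
Qed.

End FiniteSums.

Section RationalSeries.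
Context {K : fieldType}.
Implicit Types (f g : nat -> K) (p q : {poly K}).

Definition pconv p f (N : nat) : K := \sum_(i < N.+1) p`_i * f (N - i)%N.

Lemma rational_seriesP f : rational_series f <->
  exists P Q : {poly K}, Q`_0 != 0 /\ forall N, pconv Q f N = P`_N.
Proof. by []. Qed.

Lemma eq_pconv p {f g} N :
  (forall i, (i <= N)%N -> f i = g i) -> pconv p f N = pconv p g N.
Proof. by move=> fg; apply: eq_bigr => i _; rewrite fg // leq_subr. Qed.

Lemma pconv_coef p q N : pconv p (fun i => q`_i) N = (p * q)`_N.
Proof. by rewrite coefM. Qed.

(* (p q) f = p (q f): compare the coefficients of index <= N with those of a
   truncation of f. *)
Lemma pconvM p q f N : pconv (p * q) f N = pconv p (pconv q f) N.
Proof.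
pose fN : {poly K} := \poly_(i < N.+1) f i.
have fE i : (i <= N)%N -> f i = fN`_i by move=> iN; rewrite coef_poly ltnS iN.
have qfE i : (i <= N)%N -> pconv q f i = (q * fN)`_i.
  by move=> iN; rewrite -pconv_coef; apply: eq_pconv => j ji; apply/fE/(leq_trans ji).
by rewrite (eq_pconv _ _ fE) (eq_pconv _ _ qfE) !pconv_coef mulrA.
Qed.

Lemma pconvBl p q f N : pconv (p - q) f N = pconv p f N - pconv q f N.
Proof. by rewrite /pconv -sumrB; apply: eq_bigr => i _; rewrite coefB mulrBl. Qed.

Lemma pconvDr p f g N : pconv p (fun i => f i + g i) N = pconv p f N + pconv p g N.
Proof. by rewrite /pconv -big_split; apply: eq_bigr => i _; rewrite mulrDr. Qed.

Lemma pconvZr p c f N : pconv p (fun i => c * f i) N = c * pconv p f N.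
Proof. by rewrite /pconv mulr_sumr; apply: eq_bigr => i _; rewrite mulrCA. Qed.

Lemma pconvXn b f N : pconv 'X^b f N = if (b <= N)%N then f (N - b)%N else 0.
Proof.
rewrite /pconv (eq_bigr (fun i : 'I_N.+1 => if i == b :> nat then f (N - i)%N else 0)).
  by rewrite (sum_if_eq (fun i => f (N - i)%N)) ltnS.
by move=> i _; rewrite coefXn; case: eqP; rewrite ?mul1r ?mul0r.
Qed.

Lemma pconv_1subXn b f N :
  pconv (1 - 'X^b) f N = f N - (if (b <= N)%N then f (N - b)%N else 0).
Proof. by rewrite pconvBl pconvXn -(expr0 'X) pconvXn subn0. Qed.

Lemma coef0_1subXn k : (1 - 'X^(k.+1) : {poly K})`_0 != 0.
Proof. by rewrite coefB coef1 coefXn /= subr0 oner_eq0. Qed.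

Lemma rational_ext {f g} :
  rational_series f -> (forall N, f N = g N) -> rational_series g.
Proof.
move=> /rational_seriesP[P [Q [Q0 QfP]]] fg; apply/rational_seriesP.
by exists P, Q; split=> // N; rewrite -QfP; apply: eq_pconv => i _; rewrite fg.
Qed.

(* Closure properties of rational series: polynomials, P1/Q1 + P2/Q2 =
   (Q2 P1 + Q1 P2)/(Q1 Q2), scalings, differences and finite sums. *)
Lemma rational_poly p : rational_series (fun i => p`_i).
Proof.
apply/rational_seriesP; exists p, 1; split; first by rewrite coef1 oner_eq0.
by move=> N; rewrite pconv_coef mul1r.
Qed.

Lemma rationalD {f g} : rational_series f -> rational_series g ->
  rational_series (fun i => f i + g i).
Proof.
move=> /rational_seriesP[P1 [Q1 [Q10 e1]]] /rational_seriesP[P2 [Q2 [Q20 e2]]].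
apply/rational_seriesP; exists (Q2 * P1 + Q1 * P2), (Q1 * Q2).
split=> [|N]; first by rewrite coef0M mulf_neq0.
rewrite pconvDr coefD; congr (_ + _).
  by rewrite [Q1 * Q2]mulrC pconvM -pconv_coef; apply: eq_pconv => i _; rewrite e1.
by rewrite pconvM -pconv_coef; apply: eq_pconv => i _; rewrite e2.
Qed.

Lemma rationalZ c {f} : rational_series f -> rational_series (fun i => c * f i).
Proof.
move=> /rational_seriesP[P [Q [Q0 e]]]; apply/rational_seriesP.
by exists (c *: P), Q; split=> // N; rewrite pconvZr e coefZ.
Qed.

Lemma rationalB {f g} : rational_series f -> rational_series g ->
  rational_series (fun i => f i - g i).
Proof.
move=> rf rg; apply: (rational_ext (rationalD rf (rationalZ (-1) rg))) => N.
by rewrite mulN1r.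
Qed.

Lemma rational_sum (F : nat -> nat -> K) n :
  (forall j, (j < n)%N -> rational_series (F j)) ->
  rational_series (fun i => \sum_(j < n) F j i).
Proof.
elim: n => [|n IH] rF.
  by apply: (rational_ext (rational_poly 0)) => N; rewrite coef0 big_ord0.
apply: (rational_ext (rationalD (IH (fun j jn => rF j (ltnW jn))) (rF n (ltnSn n)))).
by move=> N; rewrite big_ord_recr.
Qed.

Lemma rational_pconv p {f} : rational_series f -> rational_series (pconv p f).
Proof.
move=> /rational_seriesP[P [Q [Q0 e]]]; apply/rational_seriesP.
exists (p * P), Q; split=> // N; rewrite -pconvM mulrC pconvM -pconv_coef.
by apply: eq_pconv => i _; apply: e.
Qed.

Lemma rational_pconv_inv {q f} : q`_0 != 0 ->
  rational_series (pconv q f) -> rational_series f.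
Proof.
move=> q0 /rational_seriesP[P [Q [Q0 e]]]; apply/rational_seriesP.
by exists P, (Q * q); split=> [|N]; rewrite ?coef0M ?mulf_neq0 // pconvM.
Qed.

End RationalSeries.

Section Collapse.
Context {K : fieldType}.
Implicit Types (u v : nat -> {poly K}) (p : {poly K}) (G : bser K).

(* For a sequence u of polynomials in z, [collapse u] is the coefficient
   sequence of sum_n z^n u_n(z).  Taking u_n = G_n(z^k), this is G(z, z^k). *)
Definition collapse u (N : nat) : K := \sum_(n < N.+1) (u n)`_(N - n).

Lemma eq_collapse {u v} N :
  (forall n, (n <= N)%N -> u n = v n) -> collapse u N = collapse v N.
Proof. by move=> uv; apply: eq_bigr => n _; rewrite uv // -ltnS. Qed.

Lemma collapseD u v N :
  collapse (fun n => u n + v n) N = collapse u N + collapse v N.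
Proof. by rewrite /collapse -big_split; apply: eq_bigr => n _; rewrite coefD. Qed.

Lemma collapseB u v N :
  collapse (fun n => u n - v n) N = collapse u N - collapse v N.
Proof. by rewrite /collapse -sumrB; apply: eq_bigr => n _; rewrite coefB. Qed.

Lemma collapseZ c u N : collapse (fun n => c *: u n) N = c * collapse u N.
Proof. by rewrite /collapse mulr_sumr; apply: eq_bigr => n _; rewrite coefZ. Qed.

Lemma collapse_sum (r : nat) (u : 'I_r -> nat -> {poly K}) N :
  collapse (fun n => \sum_(i < r) u i n) N = \sum_(i < r) collapse (u i) N.
Proof. by rewrite /collapse exchange_big; apply: eq_bigr => n _; rewrite coef_sum. Qed.

Lemma collapse_const (c : nat -> K) N : collapse (fun n => (c n)%:P) N = c N.
Proof.
rewrite /collapse big_ord_recr /= subnn coefC eqxx big1 ?add0r // => n _.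
by rewrite coefC subn_eq0 leqNgt ltn_ord.
Qed.

Lemma collapse_coef {u N A} :
  (N < A)%N -> collapse u N = (\sum_(n < A) 'X^n * u n)`_N.
Proof.
move=> NA; rewrite coef_sum -(sum_widen (fun n => ('X^n * u n)`_N) NA).
  apply: eq_bigr => n _; have := ltn_ord n; rewrite ltnS => nN.
  by rewrite coefXnM ltnNge nN.
by move=> n /andP[Nn _]; rewrite coefXnM Nn.
Qed.

Lemma collapse_mulXn a u N :
  collapse (fun n => 'X^a * u n) N = if (a <= N)%N then collapse u (N - a) else 0.
Proof.
rewrite (collapse_coef (ltnSn N)).
under eq_bigr do rewrite mulrCA.
rewrite -mulr_sumr coefXnM; case: leqP => // aN.
by rewrite (collapse_coef (_ : N - a < N.+1)%N) // ltnS leq_subr.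
Qed.

Lemma collapse_delay1 u N :
  collapse (fun n => if n is n'.+1 then u n' else 0) N =
  if N is N'.+1 then collapse u N' else 0.
Proof.
case: N => [|N]; first by rewrite /collapse big_ord1 coef0.
by rewrite /collapse big_ord_recl coef0 add0r.
Qed.

Lemma collapse_delay d u N :
  collapse (fun n => if (d <= n)%N then u (n - d)%N else 0) N =
  if (d <= N)%N then collapse u (N - d) else 0.
Proof.
elim: d N => [|d IH] N.
  by rewrite leq0n subn0; apply: eq_collapse => n _; rewrite leq0n subn0.
rewrite (eq_collapse (v := fun n => if n is n'.+1 then
    (if (d <= n')%N then u (n' - d)%N else 0) else 0)); last by case.
by rewrite collapse_delay1; case: N => [|N] //; rewrite IH.
Qed.

Lemma collapse_conv (v : nat -> nat -> {poly K}) N :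
  collapse (fun n => \sum_(j < n.+1) v j (n - j)%N) N =
  \sum_(j < N.+1) collapse (v j) (N - j).
Proof.
rewrite (eq_collapse (v := fun n => \sum_(j < N.+1)
    if (j <= n)%N then v j (n - j)%N else 0)); last first.
  move=> n nN; rewrite -(sum_widen (fun j => if (j <= n)%N then v j (n - j)%N else 0)
    (nN : n.+1 <= N.+1)%N); last by move=> j /andP[nj _]; rewrite leqNgt nj.
  by apply: eq_bigr => j _; rewrite -ltnS ltn_ord.
rewrite collapse_sum; apply: eq_bigr => j _.
by rewrite collapse_delay -ltnS ltn_ord.
Qed.

Lemma collapse_monomials p k M :
  collapse (fun d => p`_d *: 'X^(k * d)) M = (p \Po 'X^(k.+1))`_M.
Proof.
rewrite comp_polyE (collapse_coef (ltn_addr (size p) (ltnSn M))).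
rewrite (sum_widen (fun d => p`_d *: 'X^(k.+1) ^+ d) (leq_addl M.+1 (size p))).
  congr (_`_M); rewrite (eq_bigr (fun d : 'I_(M.+1 + size p) => p`_d *: 'X^(k.+1) ^+ d)) // => d _.
  by rewrite -scalerAr -exprD -exprM mulSn.
by move=> d /andP[pd _]; rewrite nth_default ?scale0r.
Qed.

Lemma subst_zkE G k N : subst_zk G k N = collapse (fun n => G n \Po 'X^k) N.
Proof.
apply: eq_bigr => n _; have nN : (n <= N)%N by rewrite -ltnS.
rewrite comp_polyE coef_sum; apply: eq_bigr => m _.
rewrite coefZ -exprM coefXn.
have -> : (n + k * m == N)%N = (N - n == k * m)%N by apply/eqP/eqP; lia.
by case: eqP; rewrite ?mulr1 ?mulr0.
Qed.

Lemma at_t1E G N : at_t1 G N = subst_zk G 0 N.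
Proof.
rewrite subst_zkE expr0 -[LHS](collapse_const (fun n => (G n).[1])).
by apply: eq_collapse => n _; rewrite comp_polyCr.
Qed.

End Collapse.

Section OperatorE.
Context {K : fieldType}.
Implicit Types (G H : bser K).

Lemma opE_rec G n :
  opE G n = bs_t1 G n - bs_mul_zt (bs_zt G) n + bs_mul_zt (opE G) n.
Proof.
case: n => [|n]; first by rewrite /opE /bs_div_1mzt big_ord1 expr0 mul1r addr0.
rewrite {1}/opE /bs_div_1mzt big_ord_recl /= expr0 mul1r subn0; congr (_ + _).
rewrite mulr_sumr; apply: eq_bigr => j _.
by rewrite /bump /= add1n subSS exprS mulrA.
Qed.

Lemma coef0_mul_zt H n : (bs_mul_zt H n)`_0 = 0.
Proof. by case: n => [|n]; rewrite /= ?coef0 // coefXM. Qed.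

Lemma collapse_mul_zt H k N :
  collapse (fun n => bs_mul_zt H n \Po 'X^k) N =
  if (k.+1 <= N)%N then collapse (fun n => H n \Po 'X^k) (N - k.+1) else 0.
Proof.
rewrite (eq_collapse (v := fun n => if n is n'.+1 then 'X^k * (H n' \Po 'X^k) else 0)).
  by rewrite collapse_delay1; case: N => [|N] //; rewrite collapse_mulXn.
by case=> [|n] _; rewrite /= ?comp_poly0 // comp_polyM comp_polyX.
Qed.

Lemma collapse_zt G k N :
  collapse (fun n => bs_zt G n \Po 'X^k) N = subst_zk G k.+1 N.
Proof.
transitivity (collapse (fun n => \sum_(j < n.+1) (G j)`_(n - j) *: 'X^(k * (n - j))) N).
  apply: eq_collapse => n _; rewrite /bs_zt linear_sum; apply: eq_bigr => j _.
  by rewrite linearZ /= comp_Xn_poly -exprM.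
rewrite (collapse_conv (fun j d => (G j)`_d *: 'X^(k * d))) subst_zkE.
by apply: eq_bigr => j _; exact: collapse_monomials.
Qed.

Lemma subst_zk_opE G k N : subst_zk (opE G) k N = at_t1 G N
  - (if (k.+1 <= N)%N then subst_zk G k.+1 (N - k.+1) else 0)
  + (if (k.+1 <= N)%N then subst_zk (opE G) k (N - k.+1) else 0).
Proof.
rewrite [LHS]subst_zkE (eq_collapse (v := fun n => ((G n).[1])%:P
    - (bs_mul_zt (bs_zt G) n \Po 'X^k) + (bs_mul_zt (opE G) n \Po 'X^k))); last first.
  by move=> n _; rewrite opE_rec comp_polyD comp_polyB /bs_t1 comp_polyC.
rewrite collapseD collapseB collapse_const !collapse_mul_zt collapse_zt.
by rewrite -subst_zkE.
Qed.

Lemma at_t0_opE G N : at_t0 (opE G) N = at_t1 G N.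
Proof. by rewrite /at_t0 opE_rec !coefD coefN !coef0_mul_zt coefC subr0 addr0. Qed.

Lemma opE_very_nice {G} : nice G -> very_nice (opE G).
Proof.
move=> niceG; split=> [k|]; last first.
  by apply: (rational_ext (niceG 0%N)) => N; rewrite at_t0_opE at_t1E.
apply: (rational_pconv_inv (coef0_1subXn k)).
have ratG1 : rational_series (at_t1 G).
  by apply: (rational_ext (niceG 0%N)) => N; rewrite at_t1E.
apply: (rational_ext (rationalB ratG1 (rational_pconv 'X^(k.+1) (niceG k.+1)))) => N.
by rewrite pconv_1subXn pconvXn (subst_zk_opE G k N) addrK.
Qed.

Lemma opE_vanish0 {G} : G 0%N = 0 -> opE G 0%N = 0.
Proof. by move=> G0; rewrite opE_rec /bs_t1 G0 horner0 /= !subr0 addr0. Qed.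

End OperatorE.

Section Counting.
Local Open Scope nat_scope.

(* The term z^((k+1) i) / (1 - z^m) contributes to z^M iff [hit k M m i]. *)
Definition hit (k M m i : nat) : bool := (k.+1 * i <= M) && (m %| M - k.+1 * i).

(* z^M-coefficient of sum_(i<m) z^((k+1) i) / (1 - z^m). *)
Definition Wcount (k M m : nat) : nat := \sum_(i < m) nat_of_bool (hit k M m i).

(* z^M-coefficient of sum_(j<=k) z^(j m), for m >= 1 (and 0 for m = 0). *)
Definition Ccount (k M m : nat) : nat :=
  \sum_(j < k.+1) nat_of_bool ((m != 0) && (j * m == M)).

Lemma sum_hit_succ k M m :
  \sum_(i < m) nat_of_bool (hit k M m i.+1) =
  if k.+1 <= M then Wcount k (M - k.+1) m else 0.
Proof.
rewrite /Wcount /hit; case: (leqP k.+1 M) => kM.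
  by apply: eq_bigr => i _; rewrite mulnS subnDA leq_subRL.
by rewrite big1 // => i _; rewrite mulnS leqNgt ltn_addr.
Qed.

Lemma hit0_hitm k M m :
  0 < m -> hit k M m 0 = hit k M m m + Ccount k M m :> nat.
Proof.
move=> m_gt0; rewrite /hit /Ccount muln0 subn0 leq0n /=.
have [/dvdnP[q ->]|ndvd] := boolP (m %| M).
  rewrite -mulnBl !dvdn_mull // andbT leq_pmul2r //.
  rewrite (eq_bigr (fun j : 'I_k.+1 => if j == q :> nat then 1 else 0)); last first.
    by move=> j _; rewrite eqn_pmul2r // -lt0n m_gt0; case: eqP.
  by rewrite -big_mkcond (big_ord1_eq _ (fun _ => 1)) ltnS; case: leqP.
case: andP => [[km dvd_diff]|_].
  by move: dvd_diff; rewrite dvdn_subl ?dvdn_mull // => /(negP ndvd).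
rewrite big1 // => j _.
by case: (j * m =P M) => [jmM|]; rewrite ?andbF //; move: ndvd; rewrite -jmM dvdn_mull.
Qed.

(* The recursion W(M) = C(M) + W(M - k - 1): multiplying
   sum_(i<m) z^((k+1) i) / (1 - z^m) by 1 - z^(k+1) gives sum_(j<=k) z^(j m). *)
Lemma Wcount_rec k M m :
  Wcount k M m = Ccount k M m + (if k.+1 <= M then Wcount k (M - k.+1) m else 0).
Proof.
case: m => [|m]; first by rewrite /Wcount /Ccount !big_ord0 big1 ?if_same.
have := hit0_hitm k M m.+1 (ltn0Sn m); rewrite -sum_hit_succ.
pose h i := nat_of_bool (hit k M m.+1 i).
have lastE : \sum_(i < m.+2) h i = Wcount k M m.+1 + h m.+1 by rewrite big_ord_recr.
have firstE : \sum_(i < m.+2) h i = h 0 + \sum_(i < m.+1) h i.+1 by rewrite big_ord_recl.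
rewrite /h in lastE firstE; lia.
Qed.

(* A monomial t^i, of z-degree d in z^d/(1 - z^m) (1 - (tz)^m)/(1 - tz), hits
   z^M after t = z^k exactly when d = M - k i and [hit k M m i]. *)
Lemma hit_diag k M m i d : d <= M ->
  [&& i <= d, m %| d - i & k * i == M - d] = (d == M - k * i) && hit k M m i.
Proof.
move=> dM; rewrite /hit mulSn.
have [-> | ne] := eqVneq d (M - k * i); last first.
  have -> : (k * i == M - d) = false by apply/eqP => kiE; move/eqP: ne; lia.
  by rewrite !andbF.
have [hi | hi] := leqP (i + k * i) M.
  have -> : M - k * i - i = M - (i + k * i) by lia.
  have -> : k * i == M - (M - k * i) by apply/eqP; lia.
  have -> : i <= M - k * i by lia.
  by rewrite andbT.
have -> // : (i <= M - k * i) = false.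
apply/negbTE; rewrite -ltnNge; have [i0|i_gt0] := posnP i; last by lia.
by move: hi; rewrite i0 muln0.
Qed.

End Counting.

Section OperatorN.
Context {K : fieldType}.
Implicit Types (G : bser K).

(* z^n/(1 - z^m) (1 - (tz)^m)/(1 - tz) = sum_d z^(n + d) [bterm m d]. *)
Definition bterm (m d : nat) : {poly K} :=
  \sum_(i < m) (if (i <= d)%N && (m %| d - i)%N then 'X^i else 0).

Lemma opN_conv G n : G 0%N = 0 ->
  opN G n = ((G n)`_0)%:P +
    \sum_(j < n.+1) \sum_(m < size (G j)) (G j)`_m *: bterm m (n - j).
Proof.
move=> G0; rewrite /opN; congr (_ + _).
rewrite sum_from1; last by rewrite G0 size_poly0 big_geq.
apply: eq_bigr => j _; have jn : (j <= n)%N by rewrite -ltnS.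
rewrite sum_from1 ?big_ord0 //; apply: eq_bigr => m _.
rewrite /bterm scaler_sumr; apply: eq_bigr => i _.
by rewrite leq_subRL //; case: ifP; rewrite ?scaler0.
Qed.

Lemma collapse_bterm m k M :
  collapse (fun d => bterm m d \Po 'X^k) M = (Wcount k M m)%:R.
Proof.
rewrite /collapse /bterm /Wcount natr_sum.
rewrite (eq_bigr (fun d : 'I_M.+1 => \sum_(i < m) ((if (i <= d)%N && (m %| d - i)%N then 'X^i else 0) \Po 'X^k)`_(M - d))); last by move=> d _; rewrite linear_sum coef_sum.
rewrite exchange_big; apply: eq_bigr => i _ /=.
rewrite (eq_bigr (fun d : 'I_M.+1 =>
    if d == (M - k * i)%N :> nat then (hit k M m i : nat)%:R else 0)).
  by rewrite (sum_if_eq (fun _ => (hit k M m i : nat)%:R)) ltnS leq_subr.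
move=> d _; have dM : (d <= M)%N by rewrite -ltnS.
have -> : ((if (i <= d)%N && (m %| d - i)%N then 'X^i else 0) \Po 'X^k)`_(M - d)
    = (([&& i <= d, m %| d - i & k * i == M - d]%N : nat)%:R : K).
  have [cond|ncond] := boolP ((i <= d) && (m %| d - i))%N.
    by rewrite comp_Xn_poly -exprM coefXn andbA cond eq_sym.
  by rewrite comp_poly0 coef0 andbA (negbTE ncond).
by rewrite hit_diag //; case: (d == _ :> nat).
Qed.

Definition wsum G (w : nat -> nat -> nat) (N : nat) : K :=
  \sum_(n < N.+1) \sum_(m < size (G n)) (G n)`_m * (w (N - n)%N m)%:R.

Lemma collapse_opN G k N : G 0%N = 0 ->
  collapse (fun n => opN G n \Po 'X^k) N = at_t0 G N + wsum G (Wcount k) N.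
Proof.
move=> G0; pose v j d := \sum_(m < size (G j)) (G j)`_m *: (bterm m d \Po 'X^k).
transitivity (collapse (fun n => ((G n)`_0)%:P + \sum_(j < n.+1) v j (n - j)%N) N).
  apply: eq_collapse => n _; rewrite opN_conv // comp_polyD comp_polyC linear_sum.
  congr (_ + _); apply: eq_bigr => j _; rewrite linear_sum; apply: eq_bigr => m _.
  exact: linearZ.
rewrite collapseD collapse_const collapse_conv; congr (_ + _).
apply: eq_bigr => j _; rewrite collapse_sum; apply: eq_bigr => m _.
by rewrite collapseZ collapse_bterm.
Qed.

Lemma wsum_rec G {w c : nat -> nat -> nat} {b : nat} :
  (forall M m, w M m = c M m + (if b <= M then w (M - b) m else 0))%N ->
  forall N, wsum G w N = wsum G c N + (if (b <= N)%N then wsum G w (N - b) else 0).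
Proof.
move=> wE N; pose F n M := \sum_(m < size (G n)) (G n)`_m *
  (if (b <= M)%N then w (M - b)%N m else 0%N)%:R.
transitivity (wsum G c N + \sum_(n < N.+1) F n (N - n)%N).
  rewrite /wsum -big_split; apply: eq_bigr => n _; rewrite -big_split.
  by apply: eq_bigr => m _; rewrite /= wE natrD mulrDr.
congr (_ + _); case: (leqP b N) => bN; last first.
  rewrite big1 // => n _; rewrite /F big1 // => m _.
  by rewrite ifN ?mulr0 // -ltnNge; apply: leq_ltn_trans bN; apply: leq_subr.
rewrite -(sum_widen (fun n => F n (N - n)%N) (_ : (N - b).+1 <= N.+1)%N); last 2 first.
- by rewrite ltnS leq_subr.
- move=> n /andP[nb nN]; rewrite /F big1 // => m _; rewrite ifN ?mulr0 //.
  by apply/negP => ?; lia.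
rewrite /wsum /F; apply: eq_bigr => n _; apply: eq_bigr => m _.
have := ltn_ord n; rewrite ltnS => nNb.
by rewrite ifT 1?subnAC //; lia.
Qed.

Lemma subst_zk_split G j N : subst_zk G j N = at_t0 G N +
  \sum_(n < N.+1) \sum_(m < size (G n))
    (if (m != 0%N :> nat) && (n + j * m == N)%N then (G n)`_m else 0).
Proof.
have t0E : at_t0 G N = \sum_(n < N.+1) \sum_(m < size (G n))
    (if (m == 0%N :> nat) && (n + j * m == N)%N then (G n)`_m else 0).
  rewrite (eq_bigr (fun n : 'I_N.+1 => if n == N :> nat then (G n)`_0 else 0)).
    by rewrite (sum_if_eq (fun n => (G n)`_0)) ltnSn.
  move=> n _; rewrite (eq_bigr (fun m : 'I_(size (G n)) =>
      if m == 0%N :> nat then (if n == N :> nat then (G n)`_0 else 0) else 0)).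
    rewrite (sum_if_eq (fun _ => if n == N :> nat then (G n)`_0 else 0)).
    by case: ltnP => // sG; rewrite nth_default //; case: ifP.
  by move=> m _; case: eqP => [->|]; rewrite ?muln0 ?addn0.
rewrite t0E -big_split; apply: eq_bigr => n _; rewrite -big_split.
by apply: eq_bigr => m _; case: (nat_of_ord m =P 0%N); rewrite /= ?addr0 ?add0r.
Qed.

Lemma wsum_Ccount G k N :
  wsum G (Ccount k) N = \sum_(j < k.+1) (subst_zk G j N - at_t0 G N).
Proof.
under [RHS]eq_bigr do rewrite subst_zk_split addrC addKr.
rewrite [RHS]exchange_big; apply: eq_bigr => n _; rewrite [RHS]exchange_big.
apply: eq_bigr => m _ /=; rewrite /Ccount natr_sum mulr_sumr; apply: eq_bigr => j _.
have nN : (n <= N)%N by rewrite -ltnS.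
have -> : (n + j * m == N)%N = (j * m == N - n)%N by apply/eqP/eqP; lia.
by case: (_ && _); rewrite ?mulr1 ?mulr0.
Qed.

Lemma opN_nice {G} : G 0%N = 0 -> very_nice G -> nice (opN G).
Proof.
move=> G0 [niceG ratG0] k.
have ratW : rational_series (wsum G (Wcount k)).
  apply: (rational_pconv_inv (coef0_1subXn k)).
  have ratC : rational_series (fun N => \sum_(j < k.+1) (subst_zk G j N - at_t0 G N)).
    apply: (rational_sum (fun j N => subst_zk G j N - at_t0 G N)) => j _.
    exact: rationalB (niceG j) ratG0.
  apply: (rational_ext ratC) => N.
  by rewrite -wsum_Ccount pconv_1subXn (wsum_rec G (Wcount_rec k) N) addrK.
apply: (rational_ext (rationalD ratG0 ratW)) => N.
by rewrite subst_zkE collapse_opN.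
Qed.

Lemma opN_vanish0 {G} : G 0%N = 0 -> opN G 0%N = 0.
Proof. by move=> G0; rewrite /opN G0 coef0 big_geq // addr0. Qed.

End OperatorN.

Lemma no_two_N_behead {o s} : no_two_N (o :: s) -> no_two_N s.
Proof. by case: o; case: s => [|[] s]. Qed.

(* Invariant along Theta: the current series vanishes at z = 0, is nice, and
   is very nice whenever the next operator is N. *)
Lemma nice_apply_ops {K : fieldType} (s : seq op) {G : bser K} :
  G 0%N = 0 -> nice G -> (rational_series (at_t0 G) \/ head OE s = OE) ->
  no_two_N s -> nice (apply_ops s G).
Proof.
elim: s G => [|o s IH] G G0 niceG ratG0 noNN //=.
have noNN' := no_two_N_behead noNN.
case: o ratG0 noNN => ratG0 noNN /=.
  have [niceEG ratEG0] := opE_very_nice niceG.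
  exact: IH (opE_vanish0 G0) niceEG (or_introl ratEG0) noNN'.
have {}ratG0 : rational_series (at_t0 G) by case: ratG0.
apply: IH (opN_vanish0 G0) (opN_nice G0 (conj niceG ratG0)) _ noNN'.
by right; move: noNN; case: s => [|[] s].
Qed.

Theorem mainTheorem7 (K : fieldType) (hK : [pchar K] =i pred0)
  (F : bser K) (hF0 : F 0%N = 0) (hF : very_nice F)
  (Theta : seq op) (hTheta : no_two_N Theta) :
  rational_series (at_t1 (apply_ops Theta F)).
Proof.
have niceThetaF := nice_apply_ops Theta hF0 hF.1 (or_introl hF.2) hTheta.
by apply: (rational_ext (niceThetaF 0%N)) => N; rewrite at_t1E.
Qed.
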